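(* Let $\mathbb{F}$ be an algebraically closed field of characteristic zero, $n\geq1$, and $A\in{\rm GL}_n(\mathbb{F})$. Then there exists an invertible diagonal matrix $D\in{\rm D}_n(\mathbb{F})$ such that $AD$ has $n$ pairwise distinct eigenvalues.
   Context: ${\rm D}_n(\mathbb{F})$ denotes the group of invertible diagonal $n\times n$ matrices over $\mathbb{F}$. *)

From HB Require Import structures.
From mathcomp Require Import all_boot all_order all_algebra.
Set Implicit Arguments. Unset Strict Implicit. Unset Printing Implicit Defensive.

From HB Require Import structures.
From mathcomp Require Import all_boot all_order all_algebra.
From mathcomp Require Import separable ring.
From Stdlib Require Import Classical ClassicalEpsilon.

Set Implicit Arguments.
Unset Strict Implicit.
Unset Printing Implicit Defensive.

Import GRing.Theory.
Local Open Scope ring_scope.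

(* The characteristic polynomial of A *m diag_mx d is monic and affine in
   each entry of d, and no x is a double root of it for every d: d = 1 works
   at x = 0 since det A != 0, and d = 0 at x != 0, where the polynomial is
   'X^n.  The entries of d are fixed one at a time to nonzero values that
   preserve this last property.  If two members of a pencil a + t b with
   size b < size a share a double root x, then x is a double root of every
   member and a root of the Wronskian a b' - a' b, which is nonzero in
   characteristic 0.  So each x obstructs at most one t, the obstructing x
   are among the finitely many roots of the Wronskian, and some nonzero t is
   unobstructed.  Once all entries are fixed the polynomial has no double
   root, hence n distinct roots over an algebraically closed field. *)

Lemma size_monicB (R : nzRingType) (p q : {poly R}) : p \is monic -> q \is monic ->
  size p = size q -> (size (p - q)%R < size p)%N.
Proof.
move=> /monicP lc_p /monicP lc_q eq_size.
have p_gt0 : (0 < size p)%N by rewrite size_poly_gt0 -lead_coef_eq0 lc_p oner_neq0.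
rewrite -(prednK p_gt0) ltnS; apply/leq_sizeP => j.
rewrite leq_eqVlt => /orP[/eqP <-|lt_j]; rewrite coefB.
  have -> : q`_(size p).-1 = lead_coef q by rewrite lead_coefE eq_size.
  by rewrite -lead_coefE lc_p lc_q subrr.
by rewrite !nth_default ?subrr // -?eq_size -(prednK p_gt0).
Qed.

Section DoubleRoots.

Variable R : idomainType.

Definition double_root (p : {poly R}) x := root p x && root p^`() x.

Definition wronskian (u v : {poly R}) := u * v^`() - u^`() * v.

Lemma root_pencil (a b : {poly R}) t1 t2 t x : t1 != t2 ->
  root (a + t1 *: b) x -> root (a + t2 *: b) x -> root (a + t *: b) x.
Proof.
rewrite !rootE !hornerE => neq_t /eqP ab1 /eqP ab2.
have bx0 : b.[x] = 0.
  have : (t1 - t2) * b.[x] = (a.[x] + t1 * b.[x]) - (a.[x] + t2 * b.[x]) by ring.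
  rewrite ab1 ab2 subrr => /eqP; rewrite mulf_eq0 subr_eq0 (negbTE neq_t).
  by move/eqP.
by rewrite bx0 mulr0 addr0; rewrite bx0 mulr0 addr0 in ab1; apply/eqP.
Qed.

Lemma double_root_pencil (a b : {poly R}) t1 t2 t x : t1 != t2 ->
  double_root (a + t1 *: b) x -> double_root (a + t2 *: b) x ->
  double_root (a + t *: b) x.
Proof.
rewrite /double_root !derivD !derivZ => neq_t /andP[r1 r1'] /andP[r2 r2'].
by rewrite (root_pencil t neq_t r1 r2) (root_pencil t neq_t r1' r2').
Qed.

Lemma double_root_pencil_wronskian (a b : {poly R}) t x :
  double_root (a + t *: b) x -> root (wronskian a b) x.
Proof.
rewrite /double_root derivD derivZ !rootE !hornerE => /andP[/eqP ab /eqP ab'].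
have -> : a.[x] = - (t * b.[x]) by apply/eqP; rewrite -addr_eq0 ab.
have -> : a^`().[x] = - (t * b^`().[x]) by apply/eqP; rewrite -addr_eq0 ab'.
by rewrite /wronskian; apply/eqP; ring.
Qed.

Lemma exists_unobstructed (B : R -> R -> Prop) (w : {poly R}) (ts : seq R) :
  w != 0 -> uniq ts -> (size w <= size ts)%N ->
  (forall t x, B t x -> root w x) ->
  (forall t1 t2 x, B t1 x -> B t2 x -> t1 = t2) ->
  exists2 t, t \in ts & forall x, ~ B t x.
Proof.
move=> w_neq0 uniq_ts size_ts B_root B_inj; apply: NNPP => no_good.
have [f Bf] : exists f : R -> R, forall t, t \in ts -> B t (f t).
  apply: (@choice R R (fun t x => t \in ts -> B t x)) => t.
  case: (boolP (t \in ts)) => [ts_t|]; last by exists 0.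
  apply: NNPP => no_x; apply: no_good; exists t => // x Btx.
  by apply: no_x; exists x.
suff : (size [seq f t | t <- ts] < size w)%N by rewrite size_map ltnNge size_ts.
apply: max_poly_roots => //.
  by apply/allP => _ /mapP[t ts_t ->]; apply: B_root (Bf t ts_t).
rewrite map_inj_in_uniq // => t1 t2 ts_t1 ts_t2 eq_f.
by apply: B_inj (Bf t1 ts_t1) _; rewrite eq_f; apply: Bf.
Qed.

End DoubleRoots.

Section FfunUpdate.

Variables (I : finType) (T : Type).

Definition upd (y : {ffun I -> T}) i t : {ffun I -> T} :=
  [ffun j => if j == i then t else y j].

Lemma upd_id y i : upd y i (y i) = y.
Proof. by apply/ffunP => j; rewrite ffunE; case: eqP => [->|]. Qed.

Lemma upd_upd y i s t : upd (upd y i s) i t = upd y i t.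
Proof. by apply/ffunP => j; rewrite !ffunE; case: eqP. Qed.

Lemma upd_comm y i j s t :
  i != j -> upd (upd y i s) j t = upd (upd y j t) i s.
Proof.
move=> neq_ij; apply/ffunP => k; rewrite !ffunE.
by case: eqP => [->|//]; rewrite eq_sym (negbTE neq_ij).
Qed.

End FfunUpdate.

Section Affine.

Variables (R : nzRingType) (I : finType).

Definition affine_in (P : {ffun I -> R} -> {poly R}) i :=
  forall y, exists a b, forall t, P (upd y i t) = a + t *: b.

Lemma affine_inE P i y t : affine_in P i ->
  P (upd y i t) = P (upd y i 0) + t *: (P (upd y i 1) - P (upd y i 0)).
Proof.
move=> /(_ y) [a [b P_ab]].
by rewrite !P_ab scale1r scale0r addr0 [a + b]addrC addrK.
Qed.

End Affine.

Section CharZero.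

Variable F : fieldType.
Hypothesis F_char0 : [pchar F] =i pred0.

Lemma natf_eq0 (n : nat) : (n%:R == 0 :> F) = (n == 0)%N.
Proof. by have /pcharf0P -> := F_char0. Qed.

Lemma natrI_pchar0 : injective (fun n : nat => n%:R : F).
Proof.
have le_inj m n : (m <= n)%N -> (m%:R : F) = n%:R -> m = n.
  move=> le_mn eq_mn; apply/eqP; rewrite eqn_leq le_mn -subn_eq0 -natf_eq0.
  by rewrite natrB // eq_mn subrr eqxx.
move=> m n /= eq_mn; case: (leqP m n) => [le_mn|/ltnW le_nm]; first exact: le_inj.
exact/esym/le_inj.
Qed.

Lemma lead_coef_deriv (p : {poly F}) : lead_coef p^`() = lead_coef p *+ (size p).-1.
Proof.
have [le_p1|] := leqP (size p) 1.
  have -> : (size p).-1 = 0%N by case: (size p) le_p1 => [|[]].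
  by rewrite (size1_polyC le_p1) derivC lead_coef0 mulr0n.
case sp: (size p) => [|[|m]] //= _.
have p_neq0 : p != 0 by rewrite -size_poly_eq0 sp.
have p'_m : p^`()`_m = lead_coef p *+ m.+1 by rewrite coef_deriv lead_coefE sp.
have p'_m_neq0 : p^`()`_m != 0.
  by rewrite p'_m -mulr_natr mulf_neq0 ?lead_coef_eq0 ?natf_eq0.
have size_p' : size p^`() = m.+1.
  apply/eqP; rewrite eqn_leq -ltnS -sp lt_size_deriv //= ltnNge.
  by apply: contra p'_m_neq0 => /leq_sizeP/(_ m (leqnn m)) ->.
by rewrite lead_coefE size_p' -p'_m.
Qed.

Lemma wronskian_neq0 (u v : {poly F}) :
  v != 0 -> (size v < size u)%N -> wronskian u v != 0.
Proof.
move=> v_neq0 lt_vu; have u_neq0 : u != 0.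
  by rewrite -size_poly_gt0 (leq_ltn_trans _ lt_vu).
have uv_neq0 : lead_coef u * lead_coef v != 0 by rewrite mulf_neq0 ?lead_coef_eq0.
rewrite subr_eq0; apply/negP => /eqP /(congr1 lead_coef).
rewrite !lead_coefM !lead_coef_deriv mulrnAr mulrnAl => /eqP.
rewrite -[X in X == _]mulr_natr -[X in _ == X]mulr_natr.
move=> /eqP /(mulfI uv_neq0) /natrI_pchar0 /(congr1 S).
rewrite !prednK ?size_poly_gt0 // => eq_size.
by rewrite eq_size ltnn in lt_vu.
Qed.

Section Pencil.

Variables (Y : Type) (a b : Y -> {poly F}).
Hypothesis size_pencil : forall y, (size (b y) < size (a y))%N.
Hypothesis pencil_no_double_root :
  forall x, exists y t, ~~ double_root (a y + t *: b y) x.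

Lemma pencil_nonzero_parameter :
  exists2 t, t != 0 & forall x, exists y, ~~ double_root (a y + t *: b y) x.
Proof.
have [b_eq0|] := classic (forall y, b y = 0).
  exists 1 => [|x]; first exact: oner_neq0.
  have [y [t Nyt]] := pencil_no_double_root x.
  by exists y; rewrite b_eq0 scaler0 in Nyt; rewrite b_eq0 scaler0.
move=> /not_all_ex_not [y0 /eqP b0_neq0].
have w_neq0 := wronskian_neq0 b0_neq0 (size_pencil y0).
pose Obstructs t x := forall y, double_root (a y + t *: b y) x.
have [||||t ts_t t_good] := @exists_unobstructed _ Obstructs _
    [seq i%:R | i <- iota 1 (size (wronskian (a y0) (b y0)))] w_neq0.
- by rewrite map_inj_uniq ?iota_uniq //; apply: natrI_pchar0.
- by rewrite size_map size_iota.
- by move=> t x /(_ y0); apply: double_root_pencil_wronskian.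
- move=> t1 t2 x Ob1 Ob2; apply: NNPP => /eqP neq_t.
  have [y [t /negP]] := pencil_no_double_root x.
  by apply; apply: double_root_pencil neq_t (Ob1 y) (Ob2 y).
exists t.
  by move: ts_t => /mapP[i]; rewrite mem_iota => /andP[i_gt0 _] ->; rewrite natf_eq0 -lt0n.
move=> x; apply: NNPP => no_y; apply: (t_good x) => y.
by apply: contra_notT no_y => Ny; exists y.
Qed.

End Pencil.

Section Coordinates.

Variable I : finType.

Lemma exists_nonzero_point_without_double_root
    (S : seq I) (P : {ffun I -> F} -> {poly F}) :
  (forall y, P y \is monic) -> (forall y z, size (P y) = size (P z)) ->
  (forall i, affine_in P i) ->
  (forall y z : {ffun I -> F}, {in S, y =1 z} -> P y = P z) ->
  (forall x, exists y, ~~ double_root (P y) x) ->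
  exists y : {ffun I -> F},
    (forall i, i \in S -> y i != 0) /\ forall x, ~~ double_root (P y) x.
Proof.
elim: S P => [|i S IH] P P_monic P_size P_affine P_dep P_good.
  exists [ffun=> 0]; split=> // x; have [y Py] := P_good x.
  by rewrite (P_dep _ y).
pose a y := P (upd y i 0); pose b y := P (upd y i 1) - P (upd y i 0).
have P_ab y t : P (upd y i t) = a y + t *: b y by apply: affine_inE.
have [||t0 t0_neq0 t0_good] := @pencil_nonzero_parameter _ a b.
- by move=> y; rewrite (P_size (upd y i 0) (upd y i 1)) size_monicB.
- move=> x; have [y Py] := P_good x.
  by exists y, (y i); rewrite -P_ab upd_id.
have [|||||y [y_neq0 Py]] := IH (fun y => P (upd y i t0)).
- by move=> y; apply: P_monic.
- by move=> y z; apply: P_size.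
- move=> j y; have [<-|neq_ji] := eqVneq j i.
    by exists (P (upd y j t0)), 0 => t; rewrite upd_upd scaler0 addr0.
  have [a' [b' P_ab']] := P_affine j (upd y i t0).
  by exists a', b' => t; rewrite upd_comm // eq_sym.
- move=> y z eq_yz; apply: P_dep => j; rewrite inE !ffunE.
  by case: eqP => //= _ /eq_yz.
- by move=> x; have [y Py] := t0_good x; exists y; rewrite P_ab.
exists (upd y i t0); split=> // j; rewrite inE ffunE.
by case: eqP => //= _ /y_neq0.
Qed.

End Coordinates.

End CharZero.

Lemma no_double_root_separable (F : closedFieldType) (p : {poly F}) :
  (forall x, ~~ double_root p x) -> separable_poly p.
Proof.
move=> p_simple; rewrite unlock; apply/Pdiv.ClosedField.coprimepP => x px.
by move: (p_simple x); rewrite /double_root px.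
Qed.

Lemma expand_det_col_affine (R : comPzRingType) n (M N : 'M[R]_n) i
    (c : 'I_n -> R) t :
  (forall k j, j != i -> M k j = N k j) -> (forall k, M k i = N k i + t * c k) ->
  \det M = \det N + t * \sum_k c k * cofactor N k i.
Proof.
move=> eq_MN M_i; rewrite !(expand_det_col _ i) mulr_sumr -big_split.
apply: eq_bigr => k _; have -> : cofactor M k i = cofactor N k i.
  rewrite /cofactor; congr (_ * \det _).
  by apply/matrixP => r c'; rewrite !mxE eq_MN // eq_sym neq_lift.
by rewrite M_i mulrDl mulrA [t * _]mulrC.
Qed.

Section CharPolyDiag.

Variables (F : fieldType) (n : nat) (A : 'M[F]_n).

Definition char_poly_diag_mx (y : {ffun 'I_n -> F}) :=
  char_poly_mx (A *m diag_mx (\row_j y j)).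

Definition char_poly_diag y := \det (char_poly_diag_mx y).

Lemma char_poly_diag_mxE y k j :
  char_poly_diag_mx y k j = 'X *+ (k == j) - (A k j * y j)%:P.
Proof. by rewrite /char_poly_diag_mx /char_poly_mx mul_mx_diag !mxE. Qed.

Lemma char_poly_diag_monic y : char_poly_diag y \is monic.
Proof. exact: char_poly_monic. Qed.

Lemma size_char_poly_diag y : size (char_poly_diag y) = n.+1.
Proof. exact: size_char_poly. Qed.

Lemma eigenvalue_char_poly_diag (y : {ffun 'I_n -> F}) x :
  eigenvalue (A *m diag_mx (\row_j y j)) x = root (char_poly_diag y) x.
Proof. exact: eigenvalue_root_char. Qed.

Lemma char_poly_diag_affine i : affine_in char_poly_diag i.
Proof.
move=> y; set N := char_poly_diag_mx (upd y i 0).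
exists (\det N), (\sum_k - (A k i)%:P * cofactor N k i) => t.
rewrite -mul_polyC; apply: expand_det_col_affine => [k j ji|k].
  by rewrite [LHS]char_poly_diag_mxE [RHS]char_poly_diag_mxE !ffunE (negbTE ji).
rewrite [LHS]char_poly_diag_mxE [in RHS]char_poly_diag_mxE !ffunE eqxx.
by rewrite mulr0 polyC0 subr0 polyCM mulrN mulrC.
Qed.

Lemma char_poly_diag_no_double_root :
  A \in unitmx -> forall x, exists y, ~~ double_root (char_poly_diag y) x.
Proof.
move=> A_unit x; rewrite /double_root; have [->|x_neq0] := eqVneq x 0.
  exists [ffun=> 1]; rewrite negb_and rootE horner_coef0 char_poly_det.
  rewrite det_mulmx det_diag big1 ?mulr1 => [|j _]; last by rewrite mxE ffunE.
  by rewrite mulf_neq0 ?signr_eq0 // -unitfE -unitmxE.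
exists [ffun=> 0]; rewrite negb_and rootE.
have -> : char_poly_diag [ffun=> 0] = 'X^n.
  rewrite /char_poly_diag /char_poly_diag_mx.
  have -> : A *m diag_mx (\row_j [ffun=> 0 : F] j) = 0.
    by apply/matrixP => r c; rewrite mul_mx_diag !mxE ffunE mulr0.
  by rewrite /char_poly /char_poly_mx map_mx0 subr0 det_scalar.
by rewrite hornerXn expf_neq0.
Qed.

End CharPolyDiag.

Theorem proposition9 (F : closedFieldType) (n : nat)
  (charF0 : [pchar F] =i pred0) (n_gt0 : (0 < n)%N)
  (A : 'M[F]_n) (A_unit : A \in unitmx) :
  exists d : 'rV[F]_n,
    (forall i, d 0 i != 0) /\
    exists e : 'I_n -> F,
      injective e /\ forall i, eigenvalue (A *m diag_mx d) (e i).
Proof.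
have [|||||y [y_neq0 y_simple]] := exists_nonzero_point_without_double_root
    charF0 (S := enum 'I_n) (P := char_poly_diag A).
- exact: char_poly_diag_monic.
- by move=> y z; rewrite [LHS]size_char_poly_diag [RHS]size_char_poly_diag.
- exact: char_poly_diag_affine.
- by move=> y z eq_yz; congr char_poly_diag; apply/ffunP => i; rewrite eq_yz ?mem_enum.
- exact: char_poly_diag_no_double_root.
exists (\row_j y j); split=> [i|]; first by rewrite mxE y_neq0 ?mem_enum.
have [rs p_rs] := closed_field_poly_normal (char_poly_diag A y).
rewrite (monicP (char_poly_diag_monic A y)) scale1r in p_rs.
have uniq_rs : uniq rs.
  by rewrite -separable_prod_XsubC -p_rs; apply: no_double_root_separable.
have size_rs : size rs = n.
  by have := size_char_poly_diag A y; rewrite p_rs size_prod_XsubC => -[].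
exists (fun i => rs`_i); split=> [i j /eqP|i].
  by rewrite nth_uniq ?size_rs // => /eqP /val_inj.
by rewrite eigenvalue_char_poly_diag p_rs root_prod_XsubC mem_nth ?size_rs.
Qed.
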